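(* If $H$ and $G$ are graphs and $H$ is an immersion of $G$, then $\delta^{\infty}_{\rm e}(H)\leq\delta^{\infty}_{\rm e}(G)$.
   Context: All graphs are finite, undirected, loopless, may have parallel edges. Lifting two edges $ux$ and $xw$ means deleting them and adding an edge $uw$ (nothing added if $u=w$); $H$ is an immersion of $G$ if a graph isomorphic to $H$ can be obtained from a subgraph of $G$ by a sequence of liftings. $\delta^{\infty}_{\rm e}(G)$ (edge-admissibility) is the minimum, over all linear orderings $\langle v_1,\dots,v_n\rangle$ of $V(G)$, of $\max_i\lambda_i$, where $\lambda_i$ is the minimum number of edges of $G$ whose removal destroys every path from $v_i$ to $\{v_1,\dots,v_{i-1}\}$ ($\lambda_1=0$). *)

From Stdlib Require Import Relation_Operators.
From mathcomp Require Import all_boot.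
Set Implicit Arguments. Unset Strict Implicit. Unset Printing Implicit Defensive.

(* A finite loopless multigraph on vertex type V: the multiplicity of each
   unordered pair {x,y} (a 2-element set); non-2-element sets carry no edge. *)
Record mgraph (V : finType) := MGraph {
  mult : {set V} -> nat ;
  mult_wf : forall e : {set V}, #|e| != 2 -> mult e = 0 }.

(* one lifting: remove an edge ux and a distinct edge xw, add uw (if u != w) *)
Definition lift1 (V : finType) (m m' : {set V} -> nat) : Prop :=
  exists u x w : V, [/\ u != x, x != w,
    (forall e, ((e == [set u; x]) + (e == [set x; w]) <= m e)%N) &
    (forall e, m' e = m e - ((e == [set u; x]) + (e == [set x; w]))
                      + ((u != w) && (e == [set u; w])))%N].

(* H is an immersion of G: a subgraph of G (vertex set = image of f,
   edge multiplicities m0 <= those of G, all m0-edges inside the image)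
   is turned by a sequence of liftings into m1, and f is an isomorphism
   from H onto (image f, m1). *)
Definition immersion (VH VG : finType) (H : mgraph VH) (G : mgraph VG) : Prop :=
  exists f : VH -> VG, injective f /\
  exists m0 m1 : {set VG} -> nat,
    [/\ (forall e, m0 e <= mult G e)%N,
        (forall e, 0 < m0 e -> e \subset f @: [set: VH])%N,
        clos_refl_trans _ (@lift1 VG) m0 m1 &
        (forall a b : VH, a != b -> mult H [set a; b] = m1 [set f a; f b])].

Definition adj (V : finType) (m : {set V} -> nat) : rel V :=
  fun x y => (x != y) && (0 < m [set x; y])%N.

Definition mbound (V : finType) (G : mgraph V) : nat := (\sum_(e : {set V}) mult G e)%N.

(* c is a set of edges (with multiplicities, c <= mult G) whose removal
   destroys every path from v to S (paths from v to v itself are ignored;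
   in all uses v \notin S). *)
Definition cut_of (V : finType) (G : mgraph V) (v : V) (S : {set V}) (k : nat) : bool :=
  [exists c : {ffun {set V} -> 'I_(mbound G).+1},
    [&& [forall e, (c e <= mult G e)%N],
        (\sum_(e : {set V} | #|e| == 2) (c e : nat) == k)%N &
        [forall s in S, (s != v) ==> ~~ connect (adj (fun e => mult G e - c e)%N) v s]]].

Lemma connect_noedge (V : finType) (r : rel V) x y :
  (forall a b, ~~ r a b) -> connect r x y -> x = y.
Proof.
move=> Hr /connectP [[|z p]] /= ; first by move=> _ ->.
by case/andP => rxz; rewrite (negbTE (Hr _ _)) in rxz.
Qed.

Lemma cut_of_ex (V : finType) (G : mgraph V) v S : exists k, cut_of G v S k.
Proof.
have Hb : forall e, (mult G e < (mbound G).+1)%N.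
  move=> e; rewrite ltnS /mbound (bigD1 e) //=; exact: leq_addr.
exists (\sum_(e : {set V} | #|e| == 2) mult G e)%N.
apply/existsP; exists [ffun e => Ordinal (Hb e)].
apply/and3P; split.
- by apply/forallP => e; rewrite ffunE.
- by apply/eqP; apply: eq_bigr => e _; rewrite ffunE.
- apply/forallP => s; apply/implyP => _; apply/implyP => hsv; apply/negP => hc.
  have := connect_noedge _ hc; rewrite /= => Heq.
  suff: v = s by move=> E; rewrite E eqxx in hsv.
  apply: Heq => a b; rewrite /adj ffunE /= subnn ltnn andbF //.
Qed.

Definition lambda (V : finType) (G : mgraph V) (v : V) (S : {set V}) : nat :=
  ex_minn (cut_of_ex G v S).

(* a linear ordering <v_1,...,v_n> is given by an injective rank function
   r : V -> 'I_#|V| (v_i is the vertex of rank i-1); the predecessors of v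
   are the u with r u < r v. *)
Definition order_value (V : finType) (G : mgraph V) (r : {ffun V -> 'I_#|V|}) : nat :=
  (\max_(v : V) lambda G v [set u | (r u < r v)%N])%N.

Definition adm_of (V : finType) (G : mgraph V) (k : nat) : bool :=
  [exists r : {ffun V -> 'I_#|V|}, injectiveb r && (order_value G r == k)].

Lemma adm_of_ex (V : finType) (G : mgraph V) : exists k, adm_of G k.
Proof.
exists (order_value G [ffun v => enum_rank v]).
apply/existsP; exists [ffun v => enum_rank v]; rewrite eqxx andbT.
by apply/injectiveP => x y; rewrite !ffunE; apply: enum_rank_inj.
Qed.

Definition edge_adm (V : finType) (G : mgraph V) : nat := ex_minn (adm_of_ex G).

From mathcomp Require Import all_boot.
From Stdlib Require Import Relation_Operators.
Set Implicit Arguments. Unset Strict Implicit. Unset Printing Implicit Defensive.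

(* lambda(v, S) is the minimum, over vertex sets Y containing v and avoiding
   S \ {v}, of the number of edges leaving Y.  That edge boundary can only
   shrink when passing to a subgraph or performing a lifting (if uw leaves Y,
   then so does ux or xw), and it pulls back along the embedding of H.  So
   ordering V(H) by the ranks of the images of its vertices in an optimal
   ordering of G gives every vertex of H a lambda no larger than that of its
   image in G. *)

Section EdgeBoundary.
Variable V : finType.

Definition crossing (X e : {set V}) : bool := (#|e| == 2) && (#|e :&: X| == 1).

Definition boundary (m : {set V} -> nat) (X : {set V}) : nat :=
  \sum_(e | crossing X e) m e.

Lemma crossing_pair X a b : a != b -> crossing X [set a; b] = ((a \in X) != (b \in X)).
Proof.
move=> ab; rewrite /crossing cards2 ab /=.
have ->: [set a; b] :&: X = [set x in [seq y <- [:: a; b] | y \in X]].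
  by apply/setP => y; rewrite !inE mem_filter !inE andbC.
rewrite cardsE (card_uniqP _) ?filter_uniq /= ?inE ?ab //.
by case: (a \in X); case: (b \in X).
Qed.

Lemma crossing_card2 X e : crossing X e -> #|e| == 2.
Proof. by case/andP. Qed.

Lemma leq_boundary m m' X : (forall e, m e <= m' e) -> boundary m X <= boundary m' X.
Proof. by move=> le_mm'; apply: leq_sum => e _. Qed.

Lemma sum_crossing_eq X s : \sum_(e | crossing X e) (e == s) = crossing X s.
Proof.
rewrite big_mkcond (bigD1 s) //= eqxx big1 ?addn0 => [|e /negbTE ->].
  by case: (crossing X s).
by case: (crossing X e).
Qed.

Lemma crossing_lift X u x w : u != x -> x != w ->
  (u != w) && crossing X [set u; w] <= crossing X [set u; x] + crossing X [set x; w].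
Proof.
move=> ux xw; case: (eqVneq u w) => //= uw.
rewrite !crossing_pair //.
by case: (u \in X); case: (x \in X); case: (w \in X).
Qed.

Lemma boundary_lift1 m m' X : lift1 m m' -> boundary m' X <= boundary m X.
Proof.
case=> u [x] [w] [ux xw le_dm m'E].
set d := fun e : {set V} => (e == [set u; x]) + (e == [set x; w]).
set a := fun e : {set V} => nat_of_bool ((u != w) && (e == [set u; w])).
have ->: boundary m' X = \sum_(e | crossing X e) (m e - d e) + \sum_(e | crossing X e) a e.
  by rewrite -big_split; apply: eq_bigr => e _; rewrite m'E.
have ->: boundary m X = \sum_(e | crossing X e) (m e - d e) + \sum_(e | crossing X e) d e.
  by rewrite -big_split; apply: eq_bigr => e _ /=; rewrite subnK ?le_dm.
rewrite leq_add2l big_split /= !sum_crossing_eq.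
have ->: \sum_(e | crossing X e) a e = (u != w) && crossing X [set u; w].
  rewrite /a; case: (u != w) => /=; first exact: sum_crossing_eq.
  by rewrite big1.
exact: crossing_lift.
Qed.

Lemma boundary_lifts m m' X :
  clos_refl_trans _ (@lift1 V) m m' -> boundary m' X <= boundary m X.
Proof.
elim=> [{}m {}m' /boundary_lift1 // | // | m1 m2 m3 _ le21 _ le32].
exact: leq_trans le32 le21.
Qed.

End EdgeBoundary.

Lemma crossing_preimage (U V : finType) (f : U -> V) (Y : {set V}) (e : {set U}) :
  injective f -> crossing (f @^-1: Y) e = crossing Y (f @: e).
Proof.
move=> f_inj; have [/cards2P [a [b [ab ->]]] | e_not2] := boolP (#|e| == 2).
  by rewrite imsetU1 imset_set1 !crossing_pair ?(inj_eq f_inj) // !in_set.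
by rewrite /crossing card_imset // (negbTE e_not2).
Qed.

Lemma boundary_preimage (U V : finType) (f : U -> V) (mU : {set U} -> nat)
    (mV : {set V} -> nat) (Y : {set V}) :
  injective f -> (forall a b, a != b -> mU [set a; b] = mV [set f a; f b]) ->
  boundary mU (f @^-1: Y) <= boundary mV Y.
Proof.
move=> f_inj mUV; rewrite /boundary.
have ->: \sum_(e | crossing (f @^-1: Y) e) mU e
         = \sum_(e : {set U} | crossing Y (f @: e)) mV (f @: e).
  apply: eq_big => e; first exact: crossing_preimage.
  case/andP => /cards2P [a [b [ab ->]]] _.
  by rewrite imsetU1 imset_set1 mUV.
rewrite -(big_imset mV (in2W (imset_inj f_inj))).
apply: sub_le_big => [//|n p|e' /imsetP [e cross_e ->]]; [exact: leq_addr | exact: cross_e].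
Qed.

Lemma adj_sym (V : finType) (m : {set V} -> nat) : symmetric (adj m).
Proof. by move=> x y; rewrite /adj eq_sym setUC. Qed.

Section Separation.
Variables (V : finType) (G : mgraph V).

Definition separating (v : V) (S Y : {set V}) : Prop :=
  v \in Y /\ {in S, forall s, s != v -> s \notin Y}.

Lemma mult_le_mbound e : mult G e <= mbound G.
Proof. by rewrite /mbound (bigD1 e) //= leq_addr. Qed.

Lemma lambda_le_boundary v S Y : separating v S Y -> lambda G v S <= boundary (mult G) Y.
Proof.
case=> vY Y_avoids; rewrite /lambda; case: ex_minnP => k _; apply.
have c_bound e : crossing Y e * mult G e < (mbound G).+1.
  by rewrite ltnS; case: (crossing Y e); rewrite ?mul1n ?mul0n ?mult_le_mbound.
pose c := [ffun e => Ordinal (c_bound e)].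
have c_cross e : c e = crossing Y e * mult G e :> nat by rewrite ffunE.
apply/existsP; exists c; apply/and3P; split.
- by apply/forallP => e; rewrite c_cross; case: (crossing Y e); rewrite ?mul1n.
- rewrite /boundary big_mkcond [X in _ == X]big_mkcond; apply/eqP/eq_bigr => e _.
  rewrite c_cross; have [/crossing_card2 -> | _] := boolP (crossing Y e).
    by rewrite mul1n.
  by rewrite mul0n; case: (#|e| == 2).
- have Y_closed : closed (adj (fun e => mult G e - c e)) Y.
    move=> a b /andP [ab]; apply: contraTeq; rewrite -crossing_pair // => cross_ab.
    by rewrite c_cross cross_ab mul1n subnn.
  apply/forallP => s; apply/implyP => sS; apply/implyP => sv.
  apply/negP => /(closed_connect Y_closed); rewrite vY => /esym sY.
  by move: (Y_avoids s sS sv); rewrite sY.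
Qed.

Lemma lambda_separating v S :
  exists2 Y, separating v S Y & boundary (mult G) Y <= lambda G v S.
Proof.
rewrite /lambda; case: ex_minnP => k /existsP [c /and3P [_ /eqP <- /forallP cut]] _.
set r := adj (fun e => mult G e - c e).
exists [set y | connect r v y]; first split.
- by rewrite inE connect0.
- by move=> s sS sv; rewrite inE; move: (cut s); rewrite sS sv.
apply: (@leq_trans (\sum_(e | crossing [set y | connect r v y] e) (c e : nat))).
  apply: leq_sum => e cross_e; rewrite leqNgt; apply/negP => c_lt.
  move: cross_e (crossing_card2 cross_e) => + /cards2P [a [b [ab e_ab]]].
  rewrite e_ab crossing_pair // !inE.
  have r_ab : r a b by rewrite /r /adj ab -e_ab subn_gt0.
  have same_ab : connect r v a = connect r v b.
    exact: connect_closed (sym_connect_sym (@adj_sym _ _)) v _ _ r_ab.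
  by rewrite same_ab eqxx.
apply: sub_le_big => [//|n p|e]; [exact: leq_addr | exact: crossing_card2].
Qed.

End Separation.

Lemma separating_preimage (U V : finType) (f : U -> V) v (S Y : {set V}) :
  injective f -> separating (f v) S Y -> separating v (f @^-1: S) (f @^-1: Y).
Proof.
move=> f_inj [fvY Y_avoids]; split; first by rewrite inE.
by move=> s; rewrite !inE => fsS sv; apply: Y_avoids; rewrite ?inj_eq.
Qed.

Section RankOrder.
Variables (T : finType) (g : T -> nat).

Definition rank_by (x : T) : nat := #|[set y | g y < g x]|.

Lemma rank_by_lt x y : (rank_by x < rank_by y) = (g x < g y).
Proof.
case: (ltnP (g x) (g y)) => [gxy | gyx].
  apply: proper_card; apply/properP; split; last by exists x; rewrite !inE ?ltnn.
  by apply/subsetP => z; rewrite !inE => /ltn_trans; apply.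
rewrite ltnNge; apply/negbF/subset_leq_card/subsetP => z.
by rewrite !inE => /leq_trans; apply.
Qed.

Lemma rank_by_bound x : rank_by x < #|T|.
Proof.
rewrite -cardsT; apply: proper_card; rewrite properE subsetT /=.
by apply/subsetPn; exists x; rewrite !inE ?ltnn.
Qed.

Definition order_by : {ffun T -> 'I_#|T|} := [ffun x => Ordinal (rank_by_bound x)].

Lemma order_by_lt x y : (order_by x < order_by y) = (g x < g y).
Proof. by rewrite !ffunE rank_by_lt. Qed.

Lemma order_by_inj : injective g -> injective order_by.
Proof.
move=> g_inj x y rxy; apply: g_inj.
have := order_by_lt x y; have := order_by_lt y x; rewrite rxy ltnn.
by case: ltngtP.
Qed.

End RankOrder.

Lemma edge_adm_le (V : finType) (G : mgraph V) (r : {ffun V -> 'I_#|V|}) :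
  injective r -> edge_adm G <= order_value G r.
Proof.
move=> r_inj; rewrite /edge_adm; case: ex_minnP => k _; apply.
by apply/existsP; exists r; rewrite eqxx andbT; apply/injectiveP.
Qed.

Lemma edge_adm_attained (V : finType) (G : mgraph V) :
  exists2 r : {ffun V -> 'I_#|V|}, injective r & order_value G r = edge_adm G.
Proof.
rewrite /edge_adm; case: ex_minnP => k /existsP [r /andP [/injectiveP r_inj /eqP <-]] _.
by exists r.
Qed.

Section Immersion.
Variables (VH VG : finType) (H : mgraph VH) (G : mgraph VG).
Variables (f : VH -> VG) (m0 m1 : {set VG} -> nat).
Hypotheses (f_inj : injective f) (m0_le : forall e, m0 e <= mult G e).
Hypothesis m0_m1 : clos_refl_trans _ (@lift1 VG) m0 m1.
Hypothesis H_m1 : forall a b, a != b -> mult H [set a; b] = m1 [set f a; f b].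

Lemma lambda_immersion v (S : {set VG}) : lambda H v (f @^-1: S) <= lambda G (f v) S.
Proof.
have [Y sepY bdY] := lambda_separating G (f v) S.
apply: leq_trans (lambda_le_boundary H (separating_preimage f_inj sepY)) _.
apply: leq_trans (boundary_preimage Y f_inj H_m1) _.
apply: leq_trans (boundary_lifts Y m0_m1) _.
exact: leq_trans (leq_boundary Y m0_le) bdY.
Qed.

Lemma order_value_immersion (rG : {ffun VG -> 'I_#|VG|}) :
  order_value H (order_by (fun v => rG (f v))) <= order_value G rG.
Proof.
rewrite /order_value; apply/bigmax_leqP => v _.
have ->: [set u | order_by (fun v => rG (f v)) u < order_by (fun v => rG (f v)) v]
         = f @^-1: [set w | rG w < rG (f v)].
  by apply/setP => u; rewrite !inE order_by_lt.
apply: leq_trans (lambda_immersion v [set w | rG w < rG (f v)]) _.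
exact: leq_bigmax (fun w => lambda G w [set u | rG u < rG w]) (f v).
Qed.

End Immersion.

Theorem mainTheorem11 (VH VG : finType) (H : mgraph VH) (G : mgraph VG) :
  immersion H G -> edge_adm H <= edge_adm G.
Proof.
move=> [f [f_inj [m0 [m1 [m0_le _ m0_m1 H_m1]]]]].
have [rG rG_inj <-] := edge_adm_attained G.
have rH_inj : injective (order_by (fun v => rG (f v))).
  by apply: order_by_inj => x y /val_inj /rG_inj /f_inj.
exact: leq_trans (edge_adm_le H rH_inj) (order_value_immersion f_inj m0_le m0_m1 H_m1 rG).
Qed.
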